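(* If $G$ is a connected subcubic graph of order $n\geq 6$, then $$C(G)\leq\begin{cases}\frac{7}{12}+\frac{12}{12n}, & \text{if } n\equiv 0 \pmod 4,\\[2pt] \frac{7}{12}+\frac{13}{12n}, & \text{if } n\equiv 1 \pmod 4,\\[2pt] \frac{7}{12}+\frac{14}{12n}, & \text{if } n\equiv 2 \pmod 4,\\[2pt] \frac{7}{12}+\frac{11}{12n}, & \text{if } n\equiv 3 \pmod 4.\end{cases}$$
   Context: All graphs are finite and simple. A graph is subcubic if its maximum degree is at most $3$. For a vertex $u$ of a graph $G$, $N_G(u)$ is its neighborhood, $d_G(u)$ its degree, and $m(G[N_G(u)])$ the number of edges of the subgraph induced by $N_G(u)$. The clustering coefficient of $u$ in $G$ is $C_u(G)=m(G[N_G(u)])/\binom{d_G(u)}{2}$ if $d_G(u)\geq 2$, and $C_u(G)=0$ otherwise. The clustering coefficient of $G$ is $C(G)=\frac{1}{n(G)}\sum_{u\in V(G)}C_u(G)$, where $n(G)$ is the order of $G$. *)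

From mathcomp Require Import all_boot all_order all_algebra.
Set Implicit Arguments. Unset Strict Implicit. Unset Printing Implicit Defensive.
Import Order.TTheory GRing.Theory Num.Theory.

Definition simple_graph (T : finType) (e : rel T) : Prop :=
  symmetric e /\ irreflexive e.

Definition nbhd (T : finType) (e : rel T) (u : T) : {set T} := [set v | e u v].
Definition deg (T : finType) (e : rel T) (u : T) : nat := #|nbhd e u|.

Definition subcubic (T : finType) (e : rel T) : Prop :=
  forall u, (deg e u <= 3)%N.

Definition connected_graph (T : finType) (e : rel T) : Prop :=
  forall x y : T, connect e x y.

Definition induced_edges (T : finType) (e : rel T) (A : {set T}) : {set {set T}} :=
  [set S : {set T} | (S \subset A) &&
     [exists v : T, exists w : T, (v != w) && e v w && (S == [set v; w])]].

Definition m_nbhd (T : finType) (e : rel T) (u : T) : nat :=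
  #|induced_edges e (nbhd e u)|.

Local Open Scope ring_scope.

Definition clust_v (T : finType) (e : rel T) (u : T) : rat :=
  if (2 <= deg e u)%N then (m_nbhd e u)%:R / ('C(deg e u, 2))%:R else 0.

Definition clust (T : finType) (e : rel T) : rat :=
  (#|T|%:R)^-1 * \sum_(u : T) clust_v e u.

Definition bound_num (n : nat) : nat :=
  match (n %% 4)%N with 0 => 12 | 1 => 13 | 2 => 14 | _ => 11 end.

Definition clust_bound (n : nat) : rat :=
  7%:R / 12%:R + (bound_num n)%:R / (12 * n)%N%:R.

From mathcomp Require Import all_boot all_order all_algebra.
From mathcomp Require Import zify ring.
Import Order.TTheory GRing.Theory Num.Theory.
Set Implicit Arguments. Unset Strict Implicit. Unset Printing Implicit Defensive.

(* At every vertex of a subcubic graph,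
     12 C_x + 7 d_x <= 21 + (4 + [d_x = 2]) m_x.
   Summing, the d_x add up to 2|E|, and the last term counts every triangle
   with weight at most 14 (a triangle of degree-2 vertices would be all of G).
   For n >= 5 each triangle has an edge lying in no other triangle, otherwise
   G would be K_4; deleting one such edge per triangle keeps G connected, so
   |E| >= n - 1 + t where t is the number of triangles.  Hence
   12 n C(G) <= 21 n - 14 |E| + 14 t <= 7 n + 14, and 12 n C(G) is a multiple
   of 4. *)

Lemma sum_card_incidence (T : finType) (F : {set {set T}}) (w : T -> nat) :
  (\sum_x #|[set D in F | x \in D]| * w x = \sum_(D in F) \sum_(x in D) w x)%N.
Proof.
rewrite (eq_bigr (fun x => \sum_(D in F) (x \in D) * w x)%N); last first.
  move=> x _; rewrite -sum1dep_card big_distrl big_mkcondr /=.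
  by apply: eq_bigr => D _; rewrite mulnbl mul1n.
rewrite exchange_big; apply: eq_bigr => D _.
by rewrite [RHS]big_mkcond; apply: eq_bigr => x _; rewrite mulnbl.
Qed.

Lemma cards3P (T : finType) (A : {set T}) :
  reflect (exists x y z, [/\ x != y, x != z, y != z & A = [set x; y; z]]) (#|A| == 3).
Proof.
apply: (iffP idP) => [|[x [y [z [xy xz yz ->]]]]]; last first.
  by rewrite -setUA cardsU1 cards2 yz !inE (negbTE xy) (negbTE xz).
move=> /eqP A3; have /card_gt0P [x xA] : (0 < #|A|)%N by rewrite A3.
have /cards2P [y [z [yz Axyz]]] : #|A :\ x| == 2 by rewrite -eqSS -A3 (cardsD1 x A) xA.
have : (y \in A :\ x) && (z \in A :\ x) by rewrite Axyz !inE !eqxx orbT.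
rewrite !inE => /andP [/andP [yx _] /andP [zx _]].
exists x, y, z; split; [by rewrite eq_sym.. | done |].
by rewrite -[LHS](setD1K xA) Axyz setUA.
Qed.

Lemma card3_set3 (T : finType) (A : {set T}) (x y z : T) : #|A| = 3 ->
  x \in A -> y \in A -> z \in A -> x != y -> x != z -> y != z -> A = [set x; y; z].
Proof.
move=> A3 xA yA zA xy xz yz; apply/esym/eqP; rewrite eqEcard A3.
have -> : #|[set x; y; z]| = 3 by apply/eqP/cards3P; exists x, y, z.
by rewrite leqnn andbT; apply/subsetP => v; rewrite !inE => /orP [/orP [] | ] /eqP ->.
Qed.

Section Connectivity.

Variables (T : finType) (e : rel T).

Definition edges : {set {set T}} := induced_edges e [set: T].

Lemma edgesP (S : {set T}) :
  reflect (exists v w, [/\ v != w, e v w & S = [set v; w]]) (S \in edges).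
Proof.
rewrite inE subsetT /=; apply: (iffP existsP).
  by move=> [v /existsP [w /andP [/andP [vw evw] /eqP ->]]]; exists v, w.
move=> [v [w [vw evw ->]]]; exists v; apply/existsP; exists w.
by rewrite vw evw eqxx.
Qed.

Fixpoint ball (r : T) (k : nat) : {set T} :=
  if k is k'.+1 then ball r k' :|: [set v | [exists w in ball r k', e v w]]
  else [set r].

Lemma mem_ball_path (r v : T) (p : seq T) :
  path e v p -> last v p = r -> v \in ball r (size p).
Proof.
elim: p v => [|w p IHp] v /=; first by move=> _ ->; rewrite inE.
move=> /andP [evw wp] wpr; rewrite !inE; apply/orP; right.
by apply/existsP; exists w; rewrite IHp.
Qed.

Lemma connected_descent (r : T) : connected_graph e ->
  exists h : T -> nat, forall v, v != r -> exists2 w, e v w & (h w < h v)%N.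
Proof.
move=> con.
have inball v : exists k, v \in ball r k.
  by have /connectP [p vp vpr] := con v r; exists (size p); apply: mem_ball_path.
exists (fun v => ex_minn (inball v)) => v vr.
case: ex_minnP => k; case: k => [|k]; first by rewrite inE (negbTE vr).
rewrite inE => /orP [vk /(_ k vk)|]; first by rewrite ltnn.
rewrite inE => /existsP [w /andP [wk evw]] _; exists w => //.
by case: ex_minnP => j _ /(_ k wk).
Qed.

Lemma card_edges_connected : irreflexive e -> connected_graph e ->
  (#|T| <= #|edges| + 1)%N.
Proof.
move=> irr con; case: (posnP #|T|) => [-> //|T_gt0].
have /card_gt0P [r _] := T_gt0.
have [h hdesc] := connected_descent r con.
pose parent v := odflt v [pick w | e v w & (h w < h v)%N].
have parentP v : v != r -> e v (parent v) && (h (parent v) < h v)%N.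
  move=> vr; rewrite /parent; case: pickP => [w //|none].
  by have [w evw hw] := hdesc v vr; move: (none w); rewrite evw hw.
have inj : {in [set~ r] &, injective (fun v => [set v; parent v])}.
  move=> v v'; rewrite !inE => vr v'r vv'; apply/eqP; apply: contraT => neq.
  have /andP [_ hv] := parentP v vr; have /andP [_ hv'] := parentP v' v'r.
  have : v \in [set v'; parent v'] by rewrite -vv' setU11.
  have : v' \in [set v; parent v] by rewrite vv' setU11.
  rewrite !inE eq_sym (negbTE neq) => /eqP pv /eqP pv'.
  by move: hv hv'; rewrite -pv -pv' => hv /(ltn_trans hv); rewrite ltnn.
have sub : [set [set v; parent v] | v in [set~ r]] \subset edges.
  apply/subsetP => S /imsetP [v]; rewrite in_setC1 => vr ->.
  have /andP [evp _] := parentP v vr; apply/edgesP; exists v, (parent v).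
  by split=> //; apply: contraTneq evp => <-; rewrite irr.
have := subset_leq_card sub; rewrite card_in_imset // cardsC1.
by rewrite addn1 -{2}(prednK T_gt0) ltnS.
Qed.

End Connectivity.

Section Triangles.

Variables (T : finType) (e : rel T).

Hypotheses (sym : symmetric e) (irr : irreflexive e).

Lemma deg_edges (u : T) : deg e u = #|[set S in edges e | u \in S]|.
Proof.
have inj : {in nbhd e u &, injective (fun v => [set u; v])}.
  move=> v v'; rewrite !inE => uv uv' /setP /(_ v).
  rewrite !inE eqxx orbT => /esym /orP [/eqP vu|/eqP //].
  by move: uv; rewrite vu irr.
rewrite /deg -(card_in_imset inj); apply: eq_card => S; apply/imsetP/idP.
  move=> [v]; rewrite inE => uv ->; rewrite inE setU11 andbT.
  by apply/edgesP; exists u, v; split=> //; apply: contraTneq uv => <-; rewrite irr.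
rewrite inE => /andP [/edgesP [a [b [ab eab ->]]]].
rewrite !inE => /orP [/eqP ->|/eqP ->]; first by exists b; rewrite ?inE.
by exists a; rewrite ?inE 1?sym // setUC.
Qed.

Lemma sum_deg : (\sum_u deg e u = 2 * #|edges e|)%N.
Proof.
rewrite (eq_bigr (fun u => #|[set S in edges e | u \in S]| * 1)%N); last first.
  by move=> u _; rewrite muln1 deg_edges.
rewrite sum_card_incidence -sum1_card big_distrr /=.
apply: eq_bigr => S /edgesP [a [b [ab _ ->]]].
by rewrite sum1_card cards2 ab.
Qed.

Definition is_clique (A : {set T}) : bool :=
  [forall x in A, forall y in A, (x != y) ==> e x y].

Lemma is_cliqueP (A : {set T}) :
  reflect {in A &, forall x y, x != y -> e x y} (is_clique A).
Proof.
apply: (iffP forall_inP) => [cl x y xA yA xy|cl x xA].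
  by move: (cl x xA) => /forall_inP /(_ y yA) /implyP; apply.
by apply/forall_inP => y yA; apply/implyP; apply: cl.
Qed.

Lemma is_clique1 (x : T) : is_clique [set x].
Proof. by apply/is_cliqueP => a b /set1P -> /set1P ->; rewrite eqxx. Qed.

Lemma is_cliqueU1 (A : {set T}) (w : T) :
  is_clique A -> {in A, forall a, e w a} -> is_clique (w |: A).
Proof.
move=> /is_cliqueP clA wA; apply/is_cliqueP => a b.
rewrite !inE => /orP [/eqP ->|aA] /orP [/eqP ->|bA]; rewrite ?eqxx // => ab.
- exact: wA.
- by rewrite sym; apply: wA.
- exact: clA.
Qed.

Lemma clique_nbhd (A : {set T}) (x : T) :
  is_clique A -> x \in A -> A :\ x \subset nbhd e x.
Proof.
move=> /is_cliqueP clA xA; apply/subsetP => y; rewrite !inE => /andP [yx yA].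
by apply: clA; rewrite // eq_sym.
Qed.

Lemma clique_nbhd_eq (A : {set T}) (x : T) :
  is_clique A -> x \in A -> (deg e x < #|A|)%N -> nbhd e x = A :\ x.
Proof.
move=> clA xA degx; apply/esym/eqP; rewrite eqEcard clique_nbhd //=.
by rewrite (cardsD1 x A) xA in degx.
Qed.

Definition triangles : {set {set T}} :=
  [set D : {set T} | (#|D| == 3) && is_clique D].

Lemma m_nbhd_triangles (x : T) :
  m_nbhd e x = #|[set D in triangles | x \in D]|.
Proof.
have xS S : S \in induced_edges e (nbhd e x) -> x \notin S.
  by rewrite inE => /andP [/subsetP sub _]; apply/negP => /sub; rewrite inE irr.
have inj : {in induced_edges e (nbhd e x) &, injective (fun S => x |: S)}.
  by move=> S S' /xS xS' /xS xS'' eqS; rewrite -(setU1K xS') -(setU1K xS'') eqS.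
rewrite /m_nbhd -(card_in_imset inj); apply: eq_card => D; apply/imsetP/idP.
  move=> [S]; rewrite inE => /andP [/subsetP sub /existsP [v /existsP [w]]].
  move=> /andP [/andP [vw evw] /eqP Svw] ->.
  have xv : v \in nbhd e x by apply: sub; rewrite Svw setU11.
  have xw : w \in nbhd e x by apply: sub; rewrite Svw !inE eqxx orbT.
  rewrite !inE in xv xw.
  rewrite !inE eqxx /= andbT Svw; apply/andP; split.
    apply/cards3P; exists x, v, w; rewrite setUA; split=> //.
      by apply: contraTneq xv => ->; rewrite irr.
    by apply: contraTneq xw => ->; rewrite irr.
  apply: is_cliqueU1; first by apply: is_cliqueU1 (is_clique1 w) _ => a /set1P ->.
  by move=> a; rewrite !inE => /orP [] /eqP ->.
rewrite !inE => /andP [/andP [/eqP D3 clD] xD]; exists (D :\ x); last by rewrite setD1K.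
have /cards2P [v [w [vw Dvw]]] : #|D :\ x| == 2 by rewrite -eqSS -D3 (cardsD1 x D) xD.
rewrite inE clique_nbhd //=; apply/existsP; exists v; apply/existsP; exists w.
rewrite vw Dvw eqxx andbT /=; have : (v \in D :\ x) && (w \in D :\ x).
  by rewrite Dvw !inE !eqxx orbT.
rewrite !inE => /andP [/andP [_ vD] /andP [_ wD]].
by move/is_cliqueP: clD; apply.
Qed.

Lemma m_nbhd_le_bin (x : T) : (m_nbhd e x <= 'C(deg e x, 2))%N.
Proof.
rewrite /m_nbhd /deg -cards_draws; apply/subset_leq_card/subsetP => S.
rewrite !inE => /andP [-> /existsP [v /existsP [w /andP [/andP [vw _] /eqP ->]]]].
by rewrite cards2 vw.
Qed.

Hypothesis con : connected_graph e.

Lemma connected_closed (A : {set T}) (x : T) :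
  x \in A -> (forall a b, a \in A -> e a b -> b \in A) -> A = setT.
Proof.
move=> xA closedA; apply/setP => b; rewrite inE.
have /connectP [p xp ->] := con x b.
by elim: p x xA xp => [|w p IHp] v //= vA /andP [evw wp]; apply: IHp (closedA v w vA evw) wp.
Qed.

Lemma clique_setT (Q : {set T}) (x : T) : is_clique Q -> x \in Q ->
  {in Q, forall v, deg e v < #|Q|}%N -> Q = setT.
Proof.
move=> clQ xQ degQ; apply: connected_closed xQ _ => a b aQ eab.
have : b \in nbhd e a by rewrite inE.
by rewrite (clique_nbhd_eq clQ aQ (degQ a aQ)) => /setD1P [].
Qed.

Definition tri_weight (x : T) : nat := 4 + (deg e x == 2).

Lemma triangle_weight_le (D : {set T}) : (3 < #|T|)%N -> D \in triangles ->
  (\sum_(x in D) tri_weight x <= 14)%N.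
Proof.
rewrite inE => T4 /andP [/eqP D3 clD].
have [x xD degx] : exists2 x, x \in D & deg e x != 2.
  apply/forall_inPn/negP => /forall_inP deg2.
  have /card_gt0P [x xD] : (0 < #|D|)%N by rewrite D3.
  have DT : D = setT by apply: clique_setT clD xD _ => v /deg2 /eqP ->; rewrite D3.
  by move: T4; rewrite -cardsT -DT D3.
have D'2 : #|D :\ x| = 2 by move: D3; rewrite (cardsD1 x D) xD => -[].
have w5 y : (tri_weight y <= 5)%N by rewrite /tri_weight; case: (_ == 2).
rewrite (big_setD1 x xD) /= {1}/tri_weight (negbTE degx).
apply: (@leq_trans (4 + \sum_(y in D :\ x) 5)); first by rewrite leq_add2l leq_sum.
by rewrite sum_nat_const D'2.
Qed.

Lemma sum_m_nbhd_weight : (3 < #|T|)%N ->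
  (\sum_x m_nbhd e x * tri_weight x <= 14 * #|triangles|)%N.
Proof.
move=> T4; under eq_bigr => x _ do rewrite m_nbhd_triangles.
rewrite sum_card_incidence -sum1_card big_distrr /=.
by apply: leq_sum => D DT; rewrite muln1 triangle_weight_le.
Qed.

Hypothesis sc : subcubic e.

Lemma subcubic_nbhd3 (a p q r : T) : p != q -> p != r -> q != r ->
  e a p -> e a q -> e a r -> nbhd e a = [set p; q; r].
Proof.
move=> pq pr qr ap aq ar; apply/esym/eqP; rewrite eqEcard.
have -> : #|[set p; q; r]| = 3 by apply/eqP/cards3P; exists p, q, r.
rewrite sc andbT; apply/subsetP => v.
by rewrite !inE => /orP [/orP [] | ] /eqP ->.
Qed.

Definition tri_count (S : {set T}) : nat := #|[set D in triangles | S \subset D]|.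

Lemma tri_count1_uniq (S D D' : {set T}) : tri_count S = 1 ->
  D \in triangles -> D' \in triangles -> S \subset D -> S \subset D' -> D = D'.
Proof.
move=> /eqP /cards1P [D0 S1] DT D'T SD SD'.
have : D \in [set D in triangles | S \subset D] by rewrite inE DT SD.
have : D' \in [set D in triangles | S \subset D] by rewrite inE D'T SD'.
by rewrite S1 !inE => /eqP -> /eqP ->.
Qed.

Lemma second_triangle_apex (D : {set T}) (a b : T) : D \in triangles ->
  a \in D -> b \in D -> a != b -> tri_count [set a; b] != 1 ->
  exists2 w, w \notin D & e a w && e b w.
Proof.
move=> DT aD bD ab; have abD : [set a; b] \subset D.
  by apply/subsetP => v; rewrite !inE => /orP [] /eqP ->.
have : D \in [set D in triangles | [set a; b] \subset D] by rewrite inE DT.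
rewrite /tri_count (cardsD1 D) => ->; rewrite add1n eqSS -lt0n.
move=> /card_gt0P [D']; rewrite !inE => /andP [D'D /andP [D'T abD']].
move: DT D'T; rewrite !inE => /andP [/eqP D3 _] /andP [/eqP D'3 /is_cliqueP clD'].
have aD' : a \in D' by apply: (subsetP abD'); rewrite setU11.
have bD' : b \in D' by apply: (subsetP abD'); rewrite !inE eqxx orbT.
have : (0 < #|D' :\: [set a; b]|)%N by rewrite cardsD D'3 (setIidPr abD') cards2 ab.
move=> /card_gt0P [w]; rewrite !inE negb_or eq_sym [w == b]eq_sym.
move=> /andP [/andP [aw bw] wD']; exists w; last by rewrite !clD'.
apply: contra D'D => wD; apply/eqP.
by rewrite (card3_set3 D'3 aD' bD' wD' ab aw bw) (card3_set3 D3 aD bD wD ab aw bw).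
Qed.

Hypothesis T5 : (4 < #|T|)%N.

(* If [xy] and [xz] both lie in further triangles, their apexes coincide as
   [deg e x <= 3], and [D] together with that apex is a [K_4] component. *)
Lemma triangle_private_edge (D : {set T}) : D \in triangles ->
  exists S, [/\ S \in edges e, S \subset D & tri_count S = 1].
Proof.
move=> DT; have := DT; rewrite inE => /andP [D3 clD].
have /cards3P [x [y [z [xy xz yz Dxyz]]]] := D3.
have [xD yD zD] : [/\ x \in D, y \in D & z \in D] by rewrite Dxyz !inE !eqxx !orbT.
move/is_cliqueP: (clD) => adjD.
have private u v : u \in D -> v \in D -> u != v -> tri_count [set u; v] = 1 ->
    exists S, [/\ S \in edges e, S \subset D & tri_count S = 1].
  move=> uD vD uv uv1; exists [set u; v]; split=> //.
    by apply/edgesP; exists u, v; rewrite adjD.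
  by apply/subsetP => t; rewrite !inE => /orP [] /eqP ->.
have [/(private x y xD yD xy) //|nxy] := eqVneq (tri_count [set x; y]) 1.
have [/(private x z xD zD xz) //|nxz] := eqVneq (tri_count [set x; z]) 1.
have [w1 w1D /andP [xw1 yw1]] := second_triangle_apex DT xD yD xy nxy.
have [w2 w2D /andP [xw2 zw2]] := second_triangle_apex DT xD zD xz nxz.
have outD w u : w \notin D -> u \in D -> (w == u) = false.
  by move=> wD uD; apply: contraNF wD => /eqP ->.
have Nx : nbhd e x = [set y; z; w1].
  apply: subcubic_nbhd3 (adjD x y _ _ _) (adjD x z _ _ _) xw1 => //.
    by rewrite eq_sym outD.
  by rewrite eq_sym outD.
have w21 : w2 = w1.
  have : w2 \in nbhd e x by rewrite inE.
  by rewrite Nx !inE (outD w2 y) ?(outD w2 z) //= => /eqP.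
have clK4 : is_clique (w1 |: D).
  apply: is_cliqueU1 clD _ => u; rewrite Dxyz !inE => /orP [/orP [] | ] /eqP ->;
    rewrite sym //; by rewrite -w21.
have K4 : #|w1 |: D| = 4 by rewrite cardsU1 w1D (eqP D3).
have K4T : w1 |: D = setT.
  by apply: clique_setT clK4 (setU11 w1 D) _ => v _; rewrite K4 ltnS sc.
by move: T5; rewrite -cardsT -K4T K4.
Qed.

Definition private_edge (D : {set T}) : {set T} :=
  odflt set0 [pick S in edges e | (S \subset D) && (tri_count S == 1)].

Lemma private_edgeP (D : {set T}) : D \in triangles ->
  [/\ private_edge D \in edges e, private_edge D \subset D & tri_count (private_edge D) = 1].
Proof.
move=> DT; rewrite /private_edge; case: pickP => [S /and3P [SE SD /eqP S1] //|none].
have [S [SE SD S1]] := triangle_private_edge DT.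
by move: (none S); rewrite SE SD S1 eqxx.
Qed.

Lemma private_edge_sub (D D' : {set T}) : D \in triangles -> D' \in triangles ->
  private_edge D \subset D' -> D' = D.
Proof.
move=> DT D'T sub; have [_ subD S1] := private_edgeP DT.
exact: tri_count1_uniq S1 D'T DT sub subD.
Qed.

Definition pruned : rel T :=
  [rel x y | e x y && ([set x; y] \notin private_edge @: triangles)].

(* A deleted edge [ab] of the triangle [abc] is bypassed by [a c b]: the only
   deleted edge inside a triangle is its own private edge. *)
Lemma connected_pruned : connected_graph pruned.
Proof.
move=> x y; apply: connect_sub (con x y) => a b eab.
have [/imsetP [D DT abD]|kept_ab] := boolP ([set a; b] \in private_edge @: triangles).
  2: by apply: connect1; rewrite /pruned /= eab kept_ab.
have [_ subD _] := private_edgeP DT; rewrite -abD in subD.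
have := DT; rewrite inE => /andP [D3 /is_cliqueP adjD].
have aD : a \in D by apply: (subsetP subD); rewrite setU11.
have bD : b \in D by apply: (subsetP subD); rewrite !inE eqxx orbT.
have ab : a != b by apply: contraTneq eab => ->; rewrite irr.
have : (0 < #|D :\: [set a; b]|)%N by rewrite cardsD (eqP D3) (setIidPr subD) cards2 ab.
move=> /card_gt0P [c]; rewrite inE => /andP [cab cD].
have kept u v : u \in D -> v \in D -> u != v -> c \in [set u; v] -> pruned u v.
  move=> uD vD uv cuv; rewrite /pruned /= adjD //=; apply: contra cab => /imsetP [D' D'T uvD'].
  have uvD : private_edge D' \subset D.
    by rewrite -uvD'; apply/subsetP => t; rewrite !inE => /orP [] /eqP ->.
  by rewrite abD (private_edge_sub D'T DT uvD) -uvD'.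
have ac : a != c by apply: contraNneq cab => ->; rewrite !inE eqxx.
have cb : c != b by apply: contraNneq cab => <-; rewrite !inE eqxx orbT.
apply: connect_trans (connect1 (kept a c aD cD ac _)) (connect1 (kept c b cD bD cb _)).
  by rewrite !inE eqxx orbT.
by rewrite !inE eqxx.
Qed.

Lemma card_edges_triangles : (#|T| + #|triangles| <= #|edges e| + 1)%N.
Proof.
have inj : {in triangles &, injective private_edge}.
  move=> D D' DT D'T eqD; apply/esym/private_edge_sub => //.
  by rewrite eqD; case: (private_edgeP D'T).
have sub : private_edge @: triangles \subset edges e.
  by apply/subsetP => S /imsetP [D DT ->]; case: (private_edgeP DT).
have prunedE : edges pruned \subset edges e :\: private_edge @: triangles.
  apply/subsetP => S /edgesP [v [w [vw /andP [evw kept] ->]]].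
  by rewrite inE kept; apply/edgesP; exists v, w.
have irr' : irreflexive pruned by move=> v; rewrite /pruned /= irr.
have tri_le : (#|triangles| <= #|edges e|)%N.
  by rewrite -(card_in_imset inj) subset_leq_card.
have := leq_trans (card_edges_connected irr' connected_pruned)
  (leq_add (subset_leq_card prunedE) (leqnn 1)).
by rewrite cardsD (setIidPr sub) card_in_imset // -(leq_add2r #|triangles|) addnAC subnK.
Qed.

(* [clust3 x] is [3 * C_x], an integer in a subcubic graph. *)
Definition clust3 (x : T) : nat :=
  if deg e x == 2 then 3 * m_nbhd e x else if deg e x == 3 then m_nbhd e x else 0.

Lemma clust_v_clust3 (x : T) : clust_v e x = ((clust3 x)%:R / 3%:R)%R.
Proof.
rewrite /clust_v /clust3; have := sc x.
case: (deg e x) => [|[|[|[|d]]]] //= _; rewrite ?mul0r //.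
by rewrite natrM mulrAC divff ?mul1r ?divr1 // pnatr_eq0.
Qed.

(* The coefficients make this an equality at degree 3 and at degree 2 inside a
   triangle. *)
Lemma clust3_local_bound (x : T) :
  (4 * clust3 x + 7 * deg e x <= 21 + m_nbhd e x * tri_weight x)%N.
Proof.
rewrite /clust3 /tri_weight; have := m_nbhd_le_bin x; have := sc x.
by case: (deg e x) => [|[|[|[|d]]]] //= _; rewrite ?binn; lia.
Qed.

Lemma sum_clust3_le : (4 * \sum_x clust3 x <= 7 * #|T| + 14)%N.
Proof.
have : (\sum_x (4 * clust3 x + 7 * deg e x) <= \sum_x (21 + m_nbhd e x * tri_weight x))%N.
  by apply: leq_sum => x _; apply: clust3_local_bound.
rewrite big_split [X in (_ <= X)%N]big_split /= -!big_distrr /= sum_deg sum_nat_const.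
have -> : #|[pred _ : T | true]| = #|T| by [].
have := sum_m_nbhd_weight (ltnW T5); have := card_edges_triangles; lia.
Qed.

End Triangles.

(* [7 * n + bound_num n] is [7 * n + 14] rounded down to a multiple of 4. *)
Lemma mul4_le_bound_num (k n : nat) :
  (4 * k <= 7 * n + 14 -> 4 * k <= 7 * n + bound_num n)%N.
Proof.
rewrite /bound_num; have := ltn_pmod n (isT : 0 < 4)%N; have := divn_eq n 4.
by case: (n %% 4)%N => [|[|[|[|r]]]] //= nE _; lia.
Qed.

Local Open Scope ring_scope.

Theorem theorem2 (T : finType) (e : rel T) :
  simple_graph e -> connected_graph e -> subcubic e -> (6 <= #|T|)%N ->
  clust e <= clust_bound #|T|.
Proof.
move=> [sym irr] con sc T6; have T5 : (4 < #|T|)%N by apply: ltnW.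
have := mul4_le_bound_num (sum_clust3_le sym irr con sc T5).
rewrite /clust (eq_bigr _ (fun x _ => clust_v_clust3 sc x)) -mulr_suml -natr_sum.
set K := (\sum_x clust3 e x)%N; set n := #|T|; set b := bound_num n => le_bound.
have n0 : n%:R != 0 :> rat by rewrite pnatr_eq0 -lt0n (leq_trans _ T5).
rewrite -subr_ge0 /clust_bound.
have -> : 7%:R / 12%:R + b%:R / (12 * n)%:R - n%:R^-1 * (K%:R / 3%:R) =
          (7 * n + b - 4 * K)%N%:R / (12 * n)%:R :> rat.
  by rewrite natrB // natrD !natrM; field.
by rewrite divr_ge0 ?ler0n.
Qed.
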